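(* Let $q$ be a prime power, $m>3$, $n=q^m-1$, and define $Z_{des}=\{(x,y): 1\le x,y<n,\ xy<q^m-1-q^{\lfloor m/2\rfloor}\}$ and, for integers $0\le k\le (m-1)/2$, $Z_{des,k}=\{(x,y)\in Z_{des}: q^k-1<x\le q^{k+1}-1\}$. For $l\in\{0,1,\dots,m-1\}$ let $f(x,y,l)=(-xq^l\bmod n)\,(-yq^l\bmod n)$, where $a\bmod n\in\{0,\dots,n-1\}$. Then: (a) For every $0\le k\le (m-1)/2$, every $(x,y)\in Z_{des,k}$ and every $l\in\{0,\dots,m-1\}$ with $l\ne m-k-1$, one has $f(x,y,l)\ge q^m-1-q^{\lceil m/2\rceil-1}$, and this value is attained (for $k=0$, $x=1$, $y=q^m-1-q^{\lfloor m/2\rfloor+1}$, $l=\lceil m/2\rceil-1$). (b) For every $0\le k\le (m-1)/2$, every $(x,y)\in Z_{des,k}$ and $l=m-k-1$: if $m$ is odd then $f(x,y,l)\ge q^m-1$; if $m$ is even then $f(x,y,l)\ge (q^{m/2}-1)^2$, with equality attained at $k=m/2-1$, $l=m/2$, $x=y=q^{m/2}-1$.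
   Context: Here $a\bmod n$ denotes the least nonnegative residue of $a$ modulo $n$. *)

From mathcomp Require Import all_boot.
Set Implicit Arguments. Unset Strict Implicit. Unset Printing Implicit Defensive.

Definition prime_power (q : nat) : Prop :=
  exists p e, prime p /\ 0 < e /\ q = p ^ e.

Definition negmod (n a : nat) : nat := (n - a %% n) %% n.

Definition fval (q m x y l : nat) : nat :=
  negmod (q ^ m - 1) (x * q ^ l) * negmod (q ^ m - 1) (y * q ^ l).

Definition in_Zdes (q m x y : nat) : bool :=
  [&& 1 <= x, x < q ^ m - 1, 1 <= y, y < q ^ m - 1
    & x * y < q ^ m - 1 - q ^ (m./2)].

Definition in_Zdesk (q m k x y : nat) : bool :=
  in_Zdes q m x y && (q ^ k - 1 < x <= q ^ k.+1 - 1).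

(* Put J = q^(m-l) and R = q^l, so that J R = q^m = n + 1.  As J R = 1 mod n,
   multiplying by q^l rotates base-q digits: if y = b J + s with s < J, then
   y q^l = s R + b mod n, hence -y q^l mod n = (J-1-s) R + (R-1-b), which is
   [negrot J R y] below.  For (x, y) in Z_des,k the number x has k+1 digits
   and the bound on x y caps the high digit b of y.
   - If m - l >= k+2, x is not rotated and -x q^l mod n >= n/2, so only a
     factor -y q^l mod n = 1 can bring the product below n; this forces x = 1,
     y = n - J and q^(floor(m/2)) < J, i.e. l <= ceil(m/2) - 1.
   - If m - l <= k, both factors are at least R - q^(l-k) and the product
     exceeds q^m.
   - The critical shift l = m - k - 1 needs a case analysis on the low digit
     of y; the borderline cases m = 2k+1 and m = 2k+2 give the bounds of (b). *)

From mathcomp Require Import all_boot.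
From mathcomp Require zify.
From Stdlib Require Import Lia.

Set Implicit Arguments.
Unset Strict Implicit.

Lemma leq_self_exp q i : 0 < i -> q <= q ^ i.
Proof. by case: q => // q i0; rewrite -{1}(expn1 q.+1) leq_pexp2l. Qed.

Lemma sq_leq_exp q i : 1 < i -> q * q <= q ^ i.
Proof. by case: q => [|q] i1; rewrite ?mul0n // mulnn leq_pexp2l. Qed.

Definition negrot (J R y : nat) : nat :=
  (J - 1 - y %% J) * R + (R - 1 - y %/ J).

Lemma negmod_mul_negrot J R y : 0 < J -> 0 < R -> 0 < y -> y < J * R - 1 ->
  negmod (J * R - 1) (y * R) = negrot J R y.
Proof.
move=> J0 R0 y0 yn; rewrite /negrot.
have hy := divn_eq y J.
have sJ : y %% J < J by rewrite ltn_pmod.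
have bR : y %/ J < R by rewrite ltn_divLR // mulnC; lia.
move: hy sJ bR; set b := y %/ J; set s := y %% J => hy sJ bR.
have rot_lt : s * R + b < J * R - 1 by nia.
have -> : y * R = b * (J * R - 1) + (s * R + b) by nia.
rewrite /negmod modnMDl (modn_small rot_lt) modn_small; nia.
Qed.

Lemma fval_negrot q m x y l : 1 < q -> l < m ->
  0 < x < q ^ m - 1 -> 0 < y < q ^ m - 1 ->
  fval q m x y l = negrot (q ^ (m - l)) (q ^ l) x * negrot (q ^ (m - l)) (q ^ l) y.
Proof.
move=> q1 lm /andP[x0 xn] /andP[y0 yn].
have qpos i : 0 < q ^ i by rewrite expn_gt0 ltnW.
have eN : q ^ (m - l) * q ^ l = q ^ m by rewrite -expnD subnK // ltnW.
by rewrite /fval -eN !negmod_mul_negrot // eN.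
Qed.

Lemma negrot_small J R x : 0 < R -> x < J -> negrot J R x = (J - x) * R - 1.
Proof. by move=> R0 xJ; rewrite /negrot divn_small // modn_small //; nia. Qed.

Lemma negrot_ge_high J R y : R - 1 - y %/ J <= negrot J R y.
Proof. exact: leq_addl. Qed.

Lemma negrot_ge_low J R y : y %% J < J - 1 -> R <= negrot J R y.
Proof. by move=> sJ; rewrite /negrot; nia. Qed.

Lemma negrot_low_max J R y : y %% J = J - 1 -> negrot J R y = R - 1 - y %/ J.
Proof. by move=> sJ; rewrite /negrot sJ subnn. Qed.

Lemma negrot_le1 J R y : 0 < J -> 0 < R -> y + 2 < J * R -> negrot J R y <= 1 ->
  negrot J R y = 1 /\ y + J + 1 = J * R.
Proof.
move=> J0 R0 yn; rewrite /negrot.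
have hy := divn_eq y J.
have sJ : y %% J < J by rewrite ltn_pmod.
have bR : y %/ J < R by rewrite ltn_divLR // mulnC; lia.
move: hy sJ bR; set b := y %/ J; set s := y %% J => hy sJ bR h1.
have sJ1 : s = J - 1 by nia.
have bR2 : b = R - 2 by nia.
by split; nia.
Qed.

Lemma negrot_complement J R : 0 < J -> 1 < R -> negrot J R (J * R - J - 1) = 1.
Proof.
move=> J0 R1.
have -> : J * R - J - 1 = (R - 2) * J + (J - 1) by nia.
rewrite /negrot modnMDl divnMDl // modn_small ?divn_small; lia.
Qed.

Lemma high_digit_mul_lt J R K x y : 0 < J -> K <= x -> x * y < J * R -> y %/ J * K < R.
Proof.
move=> J0 Kx xy.
have h : K * (y %/ J * J) <= x * y by apply: leq_mul => //; rewrite leq_divM.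
by rewrite -(ltn_pmul2r J0); nia.
Qed.

Lemma high_digit_succ_mul_le J R x y : 0 < J -> x < J -> y %% J = J - 1 -> x * y < J * R ->
  x * (y %/ J).+1 <= R.
Proof.
move=> J0 xJ sJ xy; have := divn_eq y J; rewrite sJ; move: (y %/ J) => b hy.
nia.
Qed.

Lemma add_lt_of_mul_lt J R x y : x <= J -> y <= J -> x * y < J * R -> x + y < J + R.
Proof.
move=> xJ yJ xy.
have h : J * (x + y) <= x * y + J * J by nia.
have J0 : 0 < J by case: J xy {h xJ yJ} => //; rewrite mul0n.
by rewrite -(ltn_pmul2l J0) mulnDr; lia.
Qed.

Lemma sq_le_mul_pred_sq B K : 2 <= B -> 2 <= K -> 8 <= B * K -> K * K <= B * (K - 1) ^ 2.
Proof.
move=> B2 K2 BK.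
have [B4|B3] := leqP 4 B; first by apply: leq_trans (leq_mul B4 (leqnn _)); nia.
have [K4|K3] := leqP 4 K; first by apply: leq_trans (leq_mul B2 (leqnn _)); nia.
by have [-> ->] : B = 3 /\ K = 3 by nia.
Qed.

Lemma negrot_mul_unwrapped J R x y F G : 0 < R -> 0 < x -> 2 * x < J -> 0 < F ->
  x * y + F + 1 < J * R -> (F < J -> R <= G) ->
  J * R - 1 - G <= negrot J R x * negrot J R y.
Proof.
move=> R0 x0 xJ F0 hxy HG; have J0 : 0 < J by lia.
rewrite negrot_small //; last by lia.
case: (leqP 2 (negrot J R y)) => hv.
  have u2 : J * R - 1 <= 2 * ((J - x) * R - 1) by nia.
  apply: leq_trans (leq_subr G _) (leq_trans u2 _).
  by rewrite mulnC leq_mul2l hv orbT.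
have [-> hy] : negrot J R y = 1 /\ y + J + 1 = J * R.
  by apply: negrot_le1 => //; nia.
have R2 : 2 <= R by nia.
have x1 : x = 1.
  apply/eqP; rewrite eqn_leq x0 andbT leqNgt; apply/negP => x2.
  have : 2 * y <= x * y by rewrite leq_mul2r x2 orbT.
  nia.
have := HG (ltac:(nia)); subst x; nia.
Qed.

Lemma negrot_mul_wrapped J R K A B x y : 0 < J -> J <= K -> K <= x -> x < A * J ->
  A <= B -> R = B * K -> x * y < J * R -> K * K <= B * (K - 1) ^ 2 ->
  J * R <= negrot J R x * negrot J R y.
Proof.
move=> J0 JK Kx xA AB eR xy HK.
have aA : x %/ J < A by rewrite ltn_divLR.
have bB : y %/ J < B.
  by rewrite -(ltn_pmul2r (leq_trans J0 JK)) -eR (high_digit_mul_lt J0 Kx xy).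
have hu : B * (K - 1) <= negrot J R x.
  by apply: leq_trans (negrot_ge_high J R x); rewrite eR mulnBr muln1; lia.
have hv : B * (K - 1) <= negrot J R y.
  by apply: leq_trans (negrot_ge_high J R y); rewrite eR mulnBr muln1; lia.
have h1 : J * R <= B * (K * K) by rewrite eR mulnCA leq_mul2l leq_mul2r JK !orbT.
have h2 : B * (K * K) <= B * (B * (K - 1) ^ 2) by rewrite leq_mul2l HK orbT.
apply: leq_trans h1 (leq_trans h2 (leq_trans _ (leq_mul hu hv))).
by rewrite mulnA mulnACA mulnn.
Qed.

Lemma critical_low_max_bound q J K R x b : 1 < q -> J = K * q -> q * J <= R ->
  2 <= x -> x < J -> 0 < b -> x * b.+1 <= R ->
  J * R - 1 <= ((J - x) * R - 1) * (R - 1 - b).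
Proof.
move=> q1 eJ qJR x2 xJ b0 xb.
have v2 : R <= 2 * (R - 1 - b) by nia.
case: (ltnP x (J - 1)) => hx.
  have u2 : 2 * R - 1 <= (J - x) * R - 1 by nia.
  have := leq_mul u2 v2; nia.
have -> : x = J - 1 by lia.
have -> : (J - (J - 1)) * R - 1 = R - 1 by rewrite subKn ?mul1n; lia.
have v3 : (J - 2) * R <= (J - 1) * (R - 1 - b) by nia.
have hR : J * (J - 1) <= (J - 2) * (R - 1).
  have [J4 | J3'] := leqP 4 J; first by nia.
  (* J = K q = 3 forces q = 3, hence R >= 9. *)
  have q3 : q = 3 by move: eJ q1; case: K => [|[|K]]; lia.
  nia.
rewrite -(@leq_pmul2l (J - 1)); last by lia.
rewrite [X in _ <= X]mulnCA; apply: leq_trans (leq_mul (leqnn (R - 1)) v3).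
apply: leq_trans (_ : (J - 1) * (J * R) <= _); first by rewrite leq_mul2l leq_subr orbT.
rewrite mulnA [(J - 1) * J]mulnC; apply: leq_trans (leq_mul hR (leqnn R)) _.
by rewrite [X in _ <= X]mulnCA mulnA.
Qed.

Lemma negrot_mul_critical q J K R x y F : 1 < q -> J = K * q -> q * J <= R ->
  K <= x -> x < J -> q * q <= F -> x * y + F + 1 < J * R ->
  J * R - 1 <= negrot J R x * negrot J R y.
Proof.
move=> q1 eJ qJR Kx xJ qF hxy.
have J0 : 0 < J by lia.
have K0 : 0 < K by move: J0; rewrite eJ muln_gt0 => /andP[].
have R2J : 2 * J <= R by rewrite (leq_trans _ qJR) // leq_mul2r q1 orbT.
rewrite negrot_small; [|lia|done].
have u1 : R - 1 <= (J - x) * R - 1 by rewrite leq_sub2r // leq_pmull // subn_gt0.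
have [hs|hs] := ltnP (y %% J) (J - 1).
  apply: leq_trans (leq_mul u1 (negrot_ge_low R hs)); clear -R2J J0; nia.
have sJ : y %% J = J - 1 by have := ltn_pmod y J0; lia.
rewrite negrot_low_max //.
have xb : x * (y %/ J).+1 <= R by apply: high_digit_succ_mul_le => //; lia.
have [->|b0] := posnP (y %/ J).
  rewrite subn0; apply: leq_trans (leq_mul u1 (leqnn _)); clear -R2J J0; nia.
have [x1|x2] := leqP x 1; last exact: critical_low_max_bound q1 eJ qJR x2 xJ b0 xb.
have ex : x = 1 by lia.
have eK : K = 1 by lia.
subst x K; rewrite mul1n in eJ; subst J.
have v3 : 3 <= R - 1 - y %/ q.
  have := divn_eq y q; rewrite sJ => hy; nia.
apply: leq_trans (leq_mul (leqnn _) v3); nia.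
Qed.

Lemma negrot_mul_critical_odd q R x y : 1 < q -> 4 <= R -> R <= x -> x < q * R ->
  x * y < q * R * R -> q * R * R - 1 <= negrot (q * R) R x * negrot (q * R) R y.
Proof.
move=> q1 R4 Rx xJ xy; set J := q * R in xJ xy *.
have J0 : 0 < J by lia.
have yJ : y < J.
  have := high_digit_mul_lt J0 Rx xy; rewrite -[X in _ < X]mul1n ltn_pmul2r; last by lia.
  by rewrite ltn_divLR // mul1n.
rewrite !negrot_small; [|lia..].
have hxy := add_lt_of_mul_lt (ltnW xJ) (ltnW yJ) xy.
have hu : (J - x) * (R - 1) <= (J - x) * R - 1 by nia.
have hv : (J - y) * (R - 1) <= (J - y) * R - 1 by nia.
(* x + y < J + R makes (J - x) + (J - y) exceed J - R = (q - 1) R. *)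
have cd : (q - 1) * R <= (J - x) * (J - y).
  have cd1 : (J - x) + (J - y) <= (J - x) * (J - y) + 1.
    move: (J - x) (J - y) (subn_gt0 x J) (subn_gt0 y J); rewrite xJ yJ.
    by move=> c d c0 d0; clear -c0 d0; nia.
  by rewrite mulnBl mul1n; lia.
have R2 : 2 * R <= (R - 1) ^ 2 by clear -R4; nia.
apply: leq_trans (leq_subr _ _) (leq_trans _ (leq_mul hu hv)).
rewrite mulnACA mulnn; apply: leq_trans (leq_mul cd R2); rewrite /J.
clear -q1; nia.
Qed.

Lemma negrot_mul_critical_even J x y : 2 <= x -> x < J -> 4 <= J -> x * y < J * J ->
  (J - 1) ^ 2 <= negrot J J x * negrot J J y.
Proof.
move=> x2 xJ J4 xy; have J0 : 0 < J by lia.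
rewrite negrot_small; [|lia|done].
have u1 : J - 1 <= (J - x) * J - 1 by rewrite leq_sub2r // leq_pmull // subn_gt0.
have [hs|hs] := ltnP (y %% J) (J - 1).
  by rewrite -mulnn leq_mul // (leq_trans (leq_subr 1 J) (negrot_ge_low J hs)).
have sJ : y %% J = J - 1 by have := ltn_pmod y J0; lia.
rewrite negrot_low_max //.
have xb : x * (y %/ J).+1 <= J by apply: high_digit_succ_mul_le.
have [->|b0] := posnP (y %/ J); first by rewrite subn0 -mulnn leq_mul.
have u2 : J * J - 2 <= 2 * ((J - x) * J - 1) by clear -xb b0; nia.
have v2 : J <= 2 * (J - 1 - y %/ J) by clear -xb x2; nia.
have := leq_mul u2 v2; clear -J4; nia.
Qed.

Lemma prime_power_gt1 q : prime_power q -> 1 < q.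
Proof.
case=> p [e [pp [e0 ->]]].
by rewrite (leq_trans (prime_gt1 pp)) // -{1}(expn1 p) leq_pexp2l // prime_gt0.
Qed.

Lemma in_Zdesk_bounds q m k x y : 1 < q -> in_Zdesk q m k x y ->
  [/\ 0 < x < q ^ m - 1, 0 < y < q ^ m - 1, x * y + q ^ m./2 + 1 < q ^ m
    & q ^ k <= x < q ^ k.+1].
Proof.
move=> q1 /andP[/and5P[-> -> -> -> xy] /andP[xk xk1]].
have : 0 < q ^ k by rewrite expn_gt0 ltnW.
have : 0 < q ^ k.+1 by rewrite expn_gt0 ltnW.
by split=> //; lia.
Qed.

Lemma fval_ge_wrapped q m k x y l : 1 < q -> 3 < m -> k <= (m - 1)./2 ->
  in_Zdesk q m k x y -> l < m -> m - k <= l -> q ^ m <= fval q m x y l.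
Proof.
move=> q1 m3 hk hZ lm hl.
have [hx hy xy /andP[Kx xK]] := in_Zdesk_bounds q1 hZ.
have qpos i : 0 < q ^ i by rewrite expn_gt0 ltnW.
have eN : q ^ (m - l) * q ^ l = q ^ m by rewrite -expnD subnK // ltnW.
rewrite fval_negrot // -eN.
apply: (@negrot_mul_wrapped _ _ (q ^ k) (q ^ (k.+1 - (m - l))) (q ^ (l - k))) => //.
- by rewrite leq_exp2l //; lia.
- by rewrite -expnD subnK //; lia.
- by rewrite leq_exp2l //; lia.
- by rewrite -expnD subnK //; lia.
- by rewrite eN; lia.
apply: sq_le_mul_pred_sq; rewrite -?expnD.
- by rewrite (leq_trans q1) // leq_self_exp //; lia.
- by rewrite (leq_trans q1) // leq_self_exp //; lia.
- apply: leq_trans (_ : q ^ 3 <= _); last by rewrite leq_exp2l //; lia.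
  by rewrite !expnS expn0 muln1; nia.
Qed.

Lemma fval_ge_unwrapped q m k x y l : 1 < q -> in_Zdesk q m k x y -> l < m - k - 1 ->
  q ^ m - 1 - q ^ (uphalf m - 1) <= fval q m x y l.
Proof.
move=> q1 hZ hl.
have [hx hy xy /andP[Kx xK]] := in_Zdesk_bounds q1 hZ.
have qpos i : 0 < q ^ i by rewrite expn_gt0 ltnW.
have eN : q ^ (m - l) * q ^ l = q ^ m by rewrite -expnD subnK // ltnW //; lia.
rewrite fval_negrot //; last by lia.
rewrite -eN; apply: (negrot_mul_unwrapped (F := q ^ m./2)) => //.
- by case/andP: hx.
- apply: leq_trans (_ : q ^ k.+2 <= _); last by rewrite leq_exp2l //; lia.
  by rewrite expnS (leq_trans _ (leq_mul q1 xK)) // mulnS.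
- by rewrite eN; lia.
by rewrite !ltn_exp2l // leq_exp2l //; lia.
Qed.

Lemma fval_ge_off_critical q m k x y l : 1 < q -> 3 < m -> k <= (m - 1)./2 ->
  in_Zdesk q m k x y -> l < m -> l <> m - k - 1 ->
  q ^ m - 1 - q ^ (uphalf m - 1) <= fval q m x y l.
Proof.
move=> q1 m3 hk hZ lm hl.
have [lt|ge] := ltnP l (m - k - 1); first exact: fval_ge_unwrapped q1 hZ lt.
apply: leq_trans (fval_ge_wrapped q1 m3 hk hZ lm _); first by rewrite -subnDA leq_subr.
lia.
Qed.

Lemma fval_critical_negrot q m k x y : 1 < q -> 2 * k < m -> in_Zdesk q m k x y ->
  fval q m x y (m - k - 1)
  = negrot (q ^ k.+1) (q ^ (m - k - 1)) x * negrot (q ^ k.+1) (q ^ (m - k - 1)) y.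
Proof.
move=> q1 km hZ; have [hx hy _ _] := in_Zdesk_bounds q1 hZ.
have -> : k.+1 = m - (m - k - 1) by lia.
by rewrite fval_negrot //; lia.
Qed.

Lemma fval_ge_critical_far q m k x y : 1 < q -> 3 < m -> 2 * k + 3 <= m ->
  in_Zdesk q m k x y -> q ^ m - 1 <= fval q m x y (m - k - 1).
Proof.
move=> q1 m3 km hZ; have [_ _ xy /andP[Kx xK]] := in_Zdesk_bounds q1 hZ.
rewrite fval_critical_negrot //; last by lia.
have eN : q ^ k.+1 * q ^ (m - k - 1) = q ^ m by rewrite -expnD; congr (_ ^ _); lia.
rewrite -eN; apply: (negrot_mul_critical (K := q ^ k) (F := q ^ m./2) q1) => //.
- by rewrite expnSr.
- by rewrite -expnS leq_exp2l //; lia.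
- by rewrite sq_leq_exp //; lia.
by rewrite eN.
Qed.

Lemma fval_ge_critical q m k x y : 1 < q -> 3 < m -> k <= (m - 1)./2 ->
  in_Zdesk q m k x y ->
  (odd m -> q ^ m - 1 <= fval q m x y (m - k - 1))
  /\ (~~ odd m -> (q ^ m./2 - 1) ^ 2 <= fval q m x y (m - k - 1)).
Proof.
move=> q1 m3 hk hZ; have [_ _ xy /andP[Kx xK]] := in_Zdesk_bounds q1 hZ.
have [far|near] := leqP (2 * k + 3) m.
  have hf := fval_ge_critical_far q1 m3 far hZ.
  split=> // hev; apply: leq_trans hf.
  have -> : q ^ m = q ^ m./2 * q ^ m./2 by rewrite -expnD; congr (_ ^ _); lia.
  by rewrite -mulnn; move: (q ^ m./2) => S; clear; nia.
have qk1 : q ^ k.+1 = q * q ^ k by rewrite expnS.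
have q4 : 4 <= q * q by nia.
rewrite fval_critical_negrot //; last by lia.
split=> hm.
  have eR : q ^ (m - k - 1) = q ^ k by congr (_ ^ _); lia.
  have eN : q ^ m = q * q ^ k * q ^ k by rewrite -expnS -expnD; congr (_ ^ _); lia.
  rewrite eR qk1 eN; apply: negrot_mul_critical_odd => //.
  - by rewrite (leq_trans q4) // sq_leq_exp //; lia.
  - by rewrite -qk1.
  - by rewrite -eN; lia.
have eR : q ^ (m - k - 1) = q ^ k.+1 by congr (_ ^ _); lia.
have eS : q ^ m./2 = q ^ k.+1 by congr (_ ^ _); lia.
have eN : q ^ m = q ^ k.+1 * q ^ k.+1 by rewrite -expnD; congr (_ ^ _); lia.
rewrite eR eS; apply: negrot_mul_critical_even => //.
- by rewrite (leq_trans q1 (leq_trans (leq_self_exp q _) Kx)) //; lia.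
- by rewrite (leq_trans q4) // sq_leq_exp //; lia.
- by rewrite -eN; lia.
Qed.

Lemma in_Zdesk_witness q m : 1 < q -> 3 < m ->
  in_Zdesk q m 0 1 (q ^ m - 1 - q ^ (m./2).+1).
Proof.
move=> q1 m3.
have qP : q ^ (m./2).+1 = q ^ m./2 * q by rewrite expnSr.
have P4 : q * q <= q ^ m./2 by rewrite sq_leq_exp //; lia.
have TN : q ^ (m./2).+1 * q <= q ^ m by rewrite -expnSr leq_exp2l //; lia.
rewrite /in_Zdesk /in_Zdes expn0 expn1 mul1n subnn.
by apply/andP; split; [apply/and5P; split | apply/andP; split]; nia.
Qed.

Lemma fval_witness q m : 1 < q -> 3 < m ->
  fval q m 1 (q ^ m - 1 - q ^ (m./2).+1) (uphalf m - 1) = q ^ m - 1 - q ^ (uphalf m - 1).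
Proof.
move=> q1 m3.
have /andP[/and5P[_ hx1 hy0 hy _] _] := in_Zdesk_witness q1 m3.
have eJ : m - (uphalf m - 1) = (m./2).+1 by lia.
have eN : q ^ (m./2).+1 * q ^ (uphalf m - 1) = q ^ m by rewrite -expnD; congr (_ ^ _); lia.
have G2 : 1 < q ^ (uphalf m - 1) by rewrite (leq_trans q1) // leq_self_exp //; lia.
have T0 : 0 < q ^ (m./2).+1 by rewrite expn_gt0 ltnW.
rewrite fval_negrot; [|done|lia|by rewrite hx1|by rewrite hy0 hy].
have ey : q ^ m - 1 - q ^ (m./2).+1
          = q ^ (m./2).+1 * q ^ (uphalf m - 1) - q ^ (m./2).+1 - 1 by rewrite eN; lia.
rewrite eJ ey negrot_complement // muln1 negrot_small ?(ltnW G2) //.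
  by rewrite mulnBl mul1n eN; lia.
by rewrite (leq_trans q1) // leq_self_exp.
Qed.

Lemma in_Zdesk_witness_even q m : 1 < q -> 3 < m -> ~~ odd m ->
  in_Zdesk q m (m./2 - 1) (q ^ m./2 - 1) (q ^ m./2 - 1).
Proof.
move=> q1 m3 hev.
have eN : q ^ m = q ^ m./2 * q ^ m./2 by rewrite -expnD; congr (_ ^ _); lia.
have S4 : q * q <= q ^ m./2 by rewrite sq_leq_exp //; lia.
have hS : q ^ (m./2 - 1) < q ^ m./2 by rewrite ltn_exp2l //; lia.
rewrite /in_Zdesk /in_Zdes eN (_ : (m./2 - 1).+1 = m./2); last by lia.
by apply/andP; split; [apply/and5P; split | apply/andP; split]; nia.
Qed.

Lemma fval_witness_even q m : 1 < q -> 3 < m -> ~~ odd m ->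
  fval q m (q ^ m./2 - 1) (q ^ m./2 - 1) m./2 = (q ^ m./2 - 1) ^ 2.
Proof.
move=> q1 m3 hev.
have /andP[/and5P[hx0 hxn _ _ _] _] := in_Zdesk_witness_even q1 m3 hev.
have eJ : m - m./2 = m./2 by lia.
have S1 : 0 < q ^ m./2 by rewrite expn_gt0 ltnW.
rewrite fval_negrot ?hx0 ?hxn //; last by lia.
have e1 : q ^ m./2 - (q ^ m./2 - 1) = 1 by lia.
by rewrite eJ negrot_small ?e1 ?mul1n ?mulnn //; lia.
Qed.

Theorem lemma4 (q m : nat) (hq : prime_power q) (hm : 3 < m) :
  (forall k x y l, k <= (m - 1)./2 -> in_Zdesk q m k x y ->
     l < m -> l <> m - k - 1 ->
     q ^ m - 1 - q ^ (uphalf m - 1) <= fval q m x y l)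
  /\ (in_Zdesk q m 0 1 (q ^ m - 1 - q ^ (m./2).+1)
      /\ uphalf m - 1 < m /\ uphalf m - 1 <> m - 0 - 1
      /\ fval q m 1 (q ^ m - 1 - q ^ (m./2).+1) (uphalf m - 1)
           = q ^ m - 1 - q ^ (uphalf m - 1))
  /\ (forall k x y, k <= (m - 1)./2 -> in_Zdesk q m k x y ->
        (odd m -> q ^ m - 1 <= fval q m x y (m - k - 1))
        /\ (~~ odd m -> (q ^ (m./2) - 1) ^ 2 <= fval q m x y (m - k - 1)))
  /\ (~~ odd m ->
        m./2 - 1 <= (m - 1)./2
        /\ m./2 = m - (m./2 - 1) - 1
        /\ in_Zdesk q m (m./2 - 1) (q ^ (m./2) - 1) (q ^ (m./2) - 1)
        /\ fval q m (q ^ (m./2) - 1) (q ^ (m./2) - 1) (m./2)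
             = (q ^ (m./2) - 1) ^ 2).
Proof.
have q1 := prime_power_gt1 hq.
split; first by move=> k x y l; apply: fval_ge_off_critical.
split; first by rewrite in_Zdesk_witness ?fval_witness //; do !split; lia.
split; first by move=> k x y; apply: fval_ge_critical.
move=> hev; rewrite in_Zdesk_witness_even ?fval_witness_even //.
by do !split; lia.
Qed.
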